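(* Let $G=\mathbb{Z}_2\times\mathbb{Z}_4$ and let $\theta$ be a normalised orthomorphism of $G$. Then $|A_{44}|=|A_{42}|=|A_{24}|=2$ and $|A_{22}|=1$.
   Context: $G$ is written multiplicatively with identity $e$; $o(g)$ is the order of $g$. A normalised orthomorphism of $G$ is a bijection $\theta\colon G\to G$ with $\theta(e)=e$ such that $x\mapsto x^{-1}\theta(x)$ is also a bijection of $G$. For such $\theta$: $A_{44}=\{x: o(x)=4, o(\theta(x))=4\}$, $A_{42}=\{x: o(x)=4, o(\theta(x))=2\}$, $A_{24}=\{x: o(x)=2, o(\theta(x))=4\}$, $A_{22}=\{x: o(x)=2, o(\theta(x))=2\}$. *)

From mathcomp Require Import all_boot all_fingroup all_algebra.
Set Implicit Arguments. Unset Strict Implicit. Unset Printing Implicit Defensive.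
Local Open Scope group_scope.

(* The group G = Z_2 x Z_4 as a finGroupType: the direct product of the
   (additive, written via the generic group notation) cyclic groups 'Z_2, 'Z_4. *)
Definition G24 : finGroupType := ('Z_2 * 'Z_4)%type.

Definition normalised_orthomorphism (gT : finGroupType) (theta : gT -> gT) : Prop :=
  [/\ bijective theta, theta 1 = 1 & bijective (fun x => x^-1 * theta x)].

Definition Aset (gT : finGroupType) (theta : gT -> gT) (i j : nat) : {set gT} :=
  [set x | (#[x] == i) && (#[theta x] == j)].

From mathcomp Require Import all_boot all_fingroup all_algebra cyclic zify.

(* In G = Z_2 x Z_4 every element satisfies x^4 = 1, so an element has order
   4 exactly when its square is nontrivial; call S = {x | x^2 <> 1} the set of
   the four elements of order 4.  Moreover G is abelian and all nontrivial
   squares coincide (they equal (0,2)), hence for all x, y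
        (x^-1 y)^2 <> 1   <=>   exactly one of x, y lies in S.
   Applied to y = theta x, and since x |-> x^-1 theta(x) is a bijection, the
   set of x for which exactly one of x, theta x lies in S is the preimage of S
   under a bijection: it has 4 elements.  As S and theta^-1(S) both have 4
   elements, the identity 2|A n B| + |A xor B| = |A| + |B| forces
   |S n theta^-1(S)| = 2, which is |A_44|.  The other three counts follow by
   inclusion-exclusion, using theta 1 = 1 to separate the identity from the
   elements of order 2. *)

Set Implicit Arguments.
Unset Strict Implicit.
Unset Printing Implicit Defensive.
Local Open Scope group_scope.

Lemma order2E (gT : finGroupType) (x : gT) :
  (#[x] == 2%N) = (x != 1) && (x ^+ 2 == 1).
Proof.
rewrite -order_eq1 -order_dvdn.
apply/eqP/andP => [-> // | [n1 d2]].
exact/(prime_nt_dvdP (isT : prime 2) n1).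
Qed.

Lemma order4E (gT : finGroupType) (expg4 : forall x : gT, x ^+ 4 = 1) (x : gT) :
  (#[x] == 4%N) = (x ^+ 2 != 1).
Proof.
have d4 : (#[x] %| 4)%N by rewrite order_dvdn expg4.
case: (boolP (x ^+ 2 == 1)) => [x2 | nx2] /=.
  have := dvdn_leq (isT : (0 < 2)%N) (etrans (order_dvdn x 2) x2).
  by case: eqP => // ->.
have nd2 : ~~ (#[x] %| 2)%N by rewrite order_dvdn.
have := dvdn_leq (isT : (0 < 4)%N) d4.
by move: d4 nd2; case: #[x] => [|[|[|[|[|n]]]]].
Qed.

Lemma square_quotient (gT : finGroupType)
    (gT_abelian : forall x y : gT, commute x y)
    (square_uniq : forall x y : gT, x ^+ 2 != 1 -> y ^+ 2 != 1 -> x ^+ 2 = y ^+ 2)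
    (x y : gT) :
  ((x^-1 * y) ^+ 2 != 1) = (x ^+ 2 != 1) (+) (y ^+ 2 != 1).
Proof.
rewrite expgMn // expgVn -(inj_eq (mulgI (x ^+ 2))) mulKVg mulg1.
case: (boolP (x ^+ 2 == 1)) => [/eqP -> | nx2]; first by rewrite eq_sym.
case: (boolP (y ^+ 2 == 1)) => [/eqP -> | ny2] /=; first by rewrite eq_sym.
by rewrite (square_uniq _ _ nx2 ny2) eqxx.
Qed.

Lemma card_inter_symdiff (T : finType) (A B : {set T}) :
  (#|A :&: B| * 2 + #|[set x | (x \in A) (+) (x \in B)]| = #|A| + #|B|)%N.
Proof.
have -> : [set x | (x \in A) (+) (x \in B)] = (A :\: B) :|: (B :\: A).
  by apply/setP => x; rewrite !inE; case: (x \in A); case: (x \in B).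
have disj : (A :\: B) :&: (B :\: A) = set0.
  by apply/setP => x; rewrite !inE; case: (x \in A); case: (x \in B).
rewrite cardsU disj cards0 subn0.
have := cardsID B A; have := cardsID A B; rewrite setIC; lia.
Qed.

(* The set of elements with a nontrivial square; in a group of exponent 4 these
   are exactly the elements of order 4. *)
Definition square_nontrivial (gT : finGroupType) : {set gT} :=
  [set x : gT | x ^+ 2 != 1].

Section Orthomorphism.
Variables (gT : finGroupType) (theta : gT -> gT).
Hypothesis theta_orth : normalised_orthomorphism theta.

Local Notation S := (square_nontrivial gT).

Lemma orth_eq1 (x : gT) : (theta x == 1) = (x == 1).
Proof.
have [theta_bij theta1 _] := theta_orth.
by rewrite -{1}theta1 (inj_eq (bij_inj theta_bij)).
Qed.

Hypothesis expg4 : forall x : gT, x ^+ 4 = 1.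

(* Description of the four sets A_ij through S and its preimage under theta:
   since theta 1 = 1, the identity is the only element outside S whose image
   is outside S and which is excluded from A_22. *)
Lemma orth_Aset_orders :
  [/\ Aset theta 4 4 = S :&: theta @^-1: S,
      Aset theta 4 2 = S :\: theta @^-1: S,
      Aset theta 2 4 = theta @^-1: S :\: S
    & Aset theta 2 2 = ~: (S :|: theta @^-1: S) :\ 1].
Proof.
have [_ theta1 _] := theta_orth.
split; apply/setP => x;
  rewrite !inE ?(order4E expg4) ?order2E ?orth_eq1;
  case: (eqVneq x 1) => [->|_]; rewrite ?theta1 ?expg1n ?eqxx //=;
  by case: (x ^+ 2 == 1); case: (theta x ^+ 2 == 1).
Qed.

Lemma card_orth_Aset :
  [/\ #|Aset theta 4 4| + #|Aset theta 4 2| = #|S|,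
      #|Aset theta 4 4| + #|Aset theta 2 4| = #|S|
    & (#|Aset theta 4 4| + #|Aset theta 4 2| + #|Aset theta 2 4|
         + #|Aset theta 2 2|).+1 = #|gT| ]%N.
Proof.
have [theta_bij theta1 _] := theta_orth.
have [A44E A42E A24E A22E] := orth_Aset_orders.
have cardB : #|theta @^-1: S| = #|S| := card_preimset S (bij_inj theta_bij).
have out1 : 1 \in ~: (S :|: theta @^-1: S) by rewrite !inE theta1 expg1n eqxx.
have A42c : #|Aset theta 4 4| + #|Aset theta 4 2| = #|S|.
  by rewrite A44E A42E cardsID.
have A24c : #|Aset theta 4 4| + #|Aset theta 2 4| = #|S|.
  by rewrite A44E A24E setIC cardsID cardB.
have A22c : #|Aset theta 2 2| + 1 = #|~: (S :|: theta @^-1: S)|.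
  by rewrite A22E [RHS](cardsD1 1) out1 addnC.
have := cardsC (S :|: theta @^-1: S).
rewrite cardsU cardB -A44E -A22c => card_split.
by split; [exact: A42c | exact: A24c | rewrite -card_split; lia].
Qed.

Hypothesis gT_abelian : forall x y : gT, commute x y.
Hypothesis square_uniq :
  forall x y : gT, x ^+ 2 != 1 -> y ^+ 2 != 1 -> x ^+ 2 = y ^+ 2.

(* The elements x for which exactly one of x, theta x has a nontrivial square
   are the preimage of S under the bijection x |-> x^-1 theta(x). *)
Lemma card_mixed_squares :
  #|[set x | (x \in S) (+) (x \in theta @^-1: S)]| = #|S|.
Proof.
have [_ _ phi_bij] := theta_orth.
rewrite -(card_preimset S (bij_inj phi_bij)); apply: eq_card => x.
by rewrite !inE (square_quotient gT_abelian square_uniq).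
Qed.

Lemma card_orth_Aset44 : (#|Aset theta 4 4| * 2 = #|S|)%N.
Proof.
have [theta_bij _ _] := theta_orth.
have [-> _ _ _] := orth_Aset_orders.
have := card_inter_symdiff S (theta @^-1: S).
by rewrite (card_preimset S (bij_inj theta_bij)) card_mixed_squares; lia.
Qed.

End Orthomorphism.

Definition G24_elems : seq G24 :=
  [seq (inZp a, inZp b) | a <- iota 0 2, b <- iota 0 4].

Lemma mem_G24_elems (x : G24) : x \in G24_elems.
Proof.
case: x => a b; rewrite -(valZpK a) -(valZpK b).
by apply: allpairs_f; rewrite mem_iota ltn_ord.
Qed.

Lemma perm_G24_elems : perm_eq (enum G24) G24_elems.
Proof.
apply: uniq_perm; [exact: enum_uniq | by vm_compute | ].
by move=> x; rewrite mem_enum mem_G24_elems.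
Qed.

Lemma card_G24_set (P : pred G24) : #|[set x | P x]| = count P G24_elems.
Proof.
rewrite cardsE cardE /enum_mem size_filter -enumT (seq.permP perm_G24_elems).
exact: eq_count.
Qed.

Lemma G24_forall (P : pred G24) : all P G24_elems -> forall x, P x.
Proof. by move/allP=> P_elems x; apply/P_elems/mem_G24_elems. Qed.

Lemma G24_forall2 (R : rel G24) :
  all (fun x => all (R x) G24_elems) G24_elems -> forall x y, R x y.
Proof. by move=> R_elems x; apply: G24_forall; move: x; apply: G24_forall. Qed.

Lemma G24_expg4 (x : G24) : x ^+ 4 = 1.
Proof. by apply/eqP; move: x; apply: G24_forall; vm_compute. Qed.

Lemma G24_abelian (x y : G24) : commute x y.
Proof. by apply/eqP; move: x y; apply: G24_forall2; vm_compute. Qed.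

Lemma G24_square_uniq (x y : G24) :
  x ^+ 2 != 1 -> y ^+ 2 != 1 -> x ^+ 2 = y ^+ 2.
Proof.
move: x y; suff sq_eq : forall x y : G24,
    (x ^+ 2 != 1) ==> (y ^+ 2 != 1) ==> (x ^+ 2 == y ^+ 2).
  by move=> x y nx2 ny2; apply/eqP; move: (sq_eq x y); rewrite nx2 ny2.
by apply: G24_forall2; vm_compute.
Qed.

Lemma card_G24_square_nontrivial : #|square_nontrivial G24| = 4%N.
Proof. by rewrite card_G24_set; vm_compute. Qed.

Lemma card_G24 : #|G24| = 8%N.
Proof. by rewrite card_prod !card_ord. Qed.

Close Scope group_scope.

Theorem corollary1 (theta : G24 -> G24) :
  normalised_orthomorphism theta ->
  [/\ #|Aset theta 4 4| = 2, #|Aset theta 4 2| = 2,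
      #|Aset theta 2 4| = 2 & #|Aset theta 2 2| = 1].
Proof.
move=> theta_orth.
have [card42 card24 partition] := card_orth_Aset theta_orth G24_expg4.
have card44 := card_orth_Aset44 theta_orth G24_expg4 G24_abelian G24_square_uniq.
rewrite card_G24_square_nontrivial in card42 card24 card44.
rewrite card_G24 in partition.
by split; lia.
Qed.
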